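(* Let $F$ be any field. Let $u\in\mathbb{N}$ and $m,n,r\in\mathbb{N}$ with $m+n\le u$, $r\le m$ and $r\le n$. Let $s=m+n-r$ and let $x\in F^{u+1}$. Then $\operatorname{rank}(H_{m,n}(x))\le r$ if and only if $\operatorname{rank}(H_{r,s}(x))\le r$.
   Context: $\mathbb{N}=\{0,1,2,\ldots\}$. For $N\in\mathbb{N}$, $x=(x_0,\ldots,x_N)\in F^{N+1}$ and integers $p,p'\ge -1$ with $p+p'\le N$, the Hankel matrix $H_{p,p'}(x)$ is the $(p+1)\times(p'+1)$ matrix $(x_{i+j})_{0\le i\le p,\,0\le j\le p'}$. *)

From mathcomp Require Import all_boot all_algebra.
Set Implicit Arguments. Unset Strict Implicit. Unset Printing Implicit Defensive.
Import GRing.Theory.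
Local Open Scope ring_scope.

(* Hankel matrix H_{p,p'}(x) = (x_{i+j})_{0<=i<=p, 0<=j<=p'} for
   x = (x_0,...,x_u) in F^{u+1}, indexed by 'I_u.+1.  The index i+j is
   converted with inord; it is only meaningful (and only used) when p+p' <= u. *)
Definition hankel (F : fieldType) (u : nat) (x : 'I_u.+1 -> F) (p q : nat)
  : 'M[F]_(p.+1, q.+1) :=
  \matrix_(i < p.+1, j < q.+1) x (inord (i + j)).

From mathcomp Require Import all_boot all_algebra.
From mathcomp Require Import zify.
Set Implicit Arguments. Unset Strict Implicit. Unset Printing Implicit Defensive.
Import GRing.Theory.
Local Open Scope ring_scope.

(* The key fact is a one-step comparison: if the p+1 rows of
   G = H_{p,q+1}(x) are linearly dependent, then
   rank H_{p+1,q}(x) <= rank G.  Its proof works with left kernels: a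
   left-null vector k of G gives two left-null vectors (k,0) and (0,k) of
   H_{p+1,q}(x), because each row of H_{p+1,q}(x) is a row of G with its last
   (resp. first) entry dropped.  The padded kernel spaces "K0" and "0K" have
   the dimension of ker G, and 0K is not contained in K0 unless ker G = 0
   (a descending induction on the columns), so the left kernel of
   H_{p+1,q}(x) is strictly bigger than that of G, which is the claim.

   Transposition (H_{p,q}^T = H_{q,p}) gives the symmetric inequality, so
   for r <= p, q the conditions rank <= r on H_{p+1,q} and H_{p,q+1} are
   equivalent; sliding from H_{m,n} to H_{r,m+n-r} one step at a time
   proves the theorem. *)

Section CoordinateEmbedding.
Variables (F : fieldType) (m n : nat) (f : 'I_m -> 'I_n).
Hypothesis f_inj : injective f.

(* rowsub f 1%:M is the matrix sending the i-th basis row vector to the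
   (f i)-th one; right multiplication by it moves column i to column f i. *)
Lemma mul_embed_img k (A : 'M[F]_(k, m)) r i :
  (A *m rowsub f 1%:M) r (f i) = A r i.
Proof.
rewrite mxE (bigD1 i) //= !mxE eqxx mulr1 big1 ?addr0 // => j ne_ji.
by rewrite !mxE (inj_eq f_inj) (negPf ne_ji) mulr0.
Qed.

Lemma mul_embed_notimg k (A : 'M[F]_(k, m)) r j :
  (forall i, f i != j) -> (A *m rowsub f 1%:M) r j = 0.
Proof.
move=> notimg; rewrite mxE big1 // => i _.
by rewrite !mxE (negPf (notimg i)) mulr0.
Qed.

Lemma colsub_embed k (B : 'M[F]_(k, n)) : colsub f B = B *m (rowsub f 1%:M)^T.
Proof. by rewrite trmx_mxsub trmx1 mulmx_colsub mulmx1. Qed.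

Lemma rank_mul_embed k (A : 'M[F]_(k, m)) : \rank (A *m rowsub f 1%:M) = \rank A.
Proof.
apply: mxrankMfree; apply/row_freeP; exists (rowsub f 1%:M)^T.
rewrite -colsub_embed; apply/matrixP => i j.
by rewrite !mxE (inj_eq f_inj).
Qed.

End CoordinateEmbedding.

Lemma widen_inj p : injective (widen_ord (leqnSn p.+1)).
Proof. by move=> i j /(congr1 val) ?; apply: val_inj. Qed.

Section Padding.
Variable F : fieldType.

(* v |-> (v, 0) and v |-> (0, v) on row vectors of length p+1. *)
Definition padr p : 'M[F]_(p.+1, p.+2) := rowsub (widen_ord (leqnSn p.+1)) 1%:M.
Definition padl p : 'M[F]_(p.+1, p.+2) := rowsub (lift ord0) 1%:M.

(* A row space whose left-padded copy lies in its right-padded copy is 0: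
   the entries of K in column i are combinations of those in column i+1,
   and the last column vanishes. *)
Lemma padl_sub_padr_eq0 k p (K : 'M[F]_(k, p.+1)) :
  (K *m padl p <= K *m padr p)%MS -> K = 0.
Proof.
case/submxP => D eqD.
have shiftK (i : 'I_p.+1) r :
    K r i = \sum_s D r s * (K *m padr p) s (lift ord0 i).
  by rewrite -(mul_embed_img (@lift_inj _ ord0)) -/(padl p) eqD mxE.
suff col0 d (i : 'I_p.+1) : (p - i)%N = d -> forall r, K r i = 0.
  by apply/matrixP => r i; rewrite (col0 _ i erefl) mxE.
elim: d i => [|d IH] i hi r; rewrite shiftK big1 // => s _.
- rewrite mul_embed_notimg ?mulr0 // => j.
  by rewrite -val_eqE /= /bump /=; have := ltn_ord j; lia.
- have lt_i1 : (i.+1 < p.+1)%N by lia.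
  have -> : lift ord0 i = widen_ord (leqnSn p.+1) (Ordinal lt_i1).
    by apply: val_inj.
  rewrite /padr mul_embed_img ?IH ?mulr0 //; last exact: widen_inj.
  by rewrite /=; lia.
Qed.

End Padding.

Section HankelShift.
Variables (F : fieldType) (u : nat) (x : 'I_u.+1 -> F).

Lemma tr_hankel p q : (hankel x p q)^T = hankel x q p.
Proof. by apply/matrixP => i j; rewrite !mxE addnC. Qed.

(* Rows 0..p of H_{p+1,q} are H_{p,q+1} without its last column ... *)
Lemma padr_hankel p q :
  padr F p *m hankel x p.+1 q = hankel x p q.+1 *m (padr F q)^T.
Proof.
rewrite -rowsubE -colsub_embed.
by apply/matrixP => i j; rewrite !mxE.
Qed.

(* ... and rows 1..p+1 of H_{p+1,q} are H_{p,q+1} without its first column. *)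
Lemma padl_hankel p q :
  padl F p *m hankel x p.+1 q = hankel x p q.+1 *m (padl F q)^T.
Proof.
rewrite -rowsubE -colsub_embed.
by apply/matrixP => i j; rewrite !mxE /= /bump /= !add1n addSnnS.
Qed.

Lemma rank_hankel_down p q : (\rank (hankel x p q.+1) <= p)%N ->
  (\rank (hankel x p.+1 q) <= \rank (hankel x p q.+1))%N.
Proof.
set G := hankel x p q.+1; set G' := hankel x p.+1 q; move=> rkG.
set K := kermx G; have KG : K *m G = 0 := mulmx_ker G.
have kerr : (K *m padr F p <= kermx G')%MS.
  by rewrite sub_kermx -mulmxA padr_hankel mulmxA KG mul0mx.
have kerl : (K *m padl F p <= kermx G')%MS.
  by rewrite sub_kermx -mulmxA padl_hankel mulmxA KG mul0mx.
have rkK : \rank K = (p.+1 - \rank G)%N := mxrank_ker G.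
have K_neq0 : K != 0 by rewrite -mxrank_eq0 rkK; lia.
have grow : (K *m padr F p < K *m padr F p + K *m padl F p)%MS.
  rewrite ltmxE addsmxSl addsmx_sub submx_refl /=.
  by apply: contra K_neq0 => /padl_sub_padr_eq0 ->.
have sub_ker : (K *m padr F p + K *m padl F p <= kermx G')%MS.
  by rewrite addsmx_sub kerr kerl.
have := mxrankS sub_ker; rewrite mxrank_ker.
have := rank_ltmx grow.
rewrite [X in (X < _)%N]rank_mul_embed ?rkK; last exact: widen_inj.
have := rank_leq_row G'; lia.
Qed.

Lemma rank_hankel_neighbours r p q : (r <= p)%N -> (r <= q)%N ->
  (\rank (hankel x p.+1 q) <= r)%N <-> (\rank (hankel x p q.+1) <= r)%N.
Proof.
move=> le_rp le_rq; split=> rk_le.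
- rewrite -mxrank_tr tr_hankel.
  have := @rank_hankel_down q p; rewrite -mxrank_tr tr_hankel; lia.
- have := @rank_hankel_down p q; lia.
Qed.

Lemma rank_hankel_slide r d n : (r <= n)%N ->
  (\rank (hankel x (r + d) n) <= r)%N <-> (\rank (hankel x r (n + d)) <= r)%N.
Proof.
elim: d n => [|d IH] n le_rn; first by rewrite !addn0.
rewrite !addnS rank_hankel_neighbours ?leq_addr // -[(n + d).+1]addSn.
exact: IH (leqW le_rn).
Qed.

End HankelShift.

Theorem lemma11 (F : fieldType) (u m n r : nat) (x : 'I_u.+1 -> F) :
  (m + n <= u)%N -> (r <= m)%N -> (r <= n)%N ->
  (\rank (hankel x m n) <= r)%N <-> (\rank (hankel x r (m + n - r)) <= r)%N.
Proof.
move=> _ le_rm le_rn.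
have -> : (m + n - r = n + (m - r))%N by lia.
by have := rank_hankel_slide x (m - r) le_rn; rewrite subnKC.
Qed.
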